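(* Let $\lambda>0$ and let $H_3=\mathbb{R}^3$ with coordinates $(x,y,z)$ carry the Lorentzian metric $g_1=-\frac{1}{\lambda^2}dx^2+dy^2+(x\,dy+dz)^2$, with Levi-Civita connection $\nabla$. Let $e_1=\partial_z$, $e_2=\partial_y-x\partial_z$, $e_3=\lambda\partial_x$, and let $V_2=\partial_y\,(=xe_1+e_2)$. Then every $V_2$-magnetic curve $\gamma(t)=(x(t),y(t),z(t))$, i.e. every smooth curve with $\nabla_{\gamma'}\gamma'=V_2\wedge\gamma'$, satisfies the system $y''+x'(z'+xy')=-\frac{xx'}{\lambda}$, $(\lambda y'-1)(z'+xy')=-xy'-\frac{x''}{\lambda}$, $(z'+xy')'=\frac{x'}{\lambda}$.
   Context: $(e_1,e_2,e_3)$ is a $g_1$-orthonormal frame with $e_3$ timelike. For $X=\sum X^ie_i$, $Y=\sum Y^ie_i$ the vector product is defined in this frame by $X\wedge Y=(X^2Y^3-X^3Y^2)e_1+(X^3Y^1-X^1Y^3)e_2+(X^2Y^1-X^1Y^2)e_3$. Primes denote derivatives in $t$. *)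

From Stdlib Require Import Reals.
From Coquelicot Require Import Coquelicot.
Open Scope R_scope.

(* Coordinates on H_3 = R^3 are (x,y,z), indexed 0,1,2. *)

Definition sum3 (f : nat -> R) : R := f 0%nat + f 1%nat + f 2%nat.

Definition kron (i j : nat) : R := if Nat.eqb i j then 1 else 0.

(* coefficients of the 1-form x dy + dz *)
Definition theta (x : R) (i : nat) : R :=
  match i with 1%nat => x | 2%nat => 1 | _ => 0 end.

Definition g1 (lam x y z : R) (i j : nat) : R :=
  - / (lam ^ 2) * kron 0 i * kron 0 j + kron 1 i * kron 1 j
  + theta x i * theta x j.

Definition cof3 (M : nat -> nat -> R) (i j : nat) : R :=
  let i1 := ((i + 1) mod 3)%nat in let i2 := ((i + 2) mod 3)%nat in
  let j1 := ((j + 1) mod 3)%nat in let j2 := ((j + 2) mod 3)%nat in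
  M i1 j1 * M i2 j2 - M i1 j2 * M i2 j1.
Definition det3 (M : nat -> nat -> R) : R := sum3 (fun j => M 0%nat j * cof3 M 0%nat j).
Definition inv3 (M : nat -> nat -> R) (k l : nat) : R := cof3 M l k / det3 M.

Definition g1inv (lam x y z : R) (k l : nat) : R := inv3 (g1 lam x y z) k l.

Definition dpart (f : R -> R -> R -> R) (l : nat) (x y z : R) : R :=
  match l with
  | 0%nat => Derive (fun s => f s y z) x
  | 1%nat => Derive (fun s => f x s z) y
  | _ => Derive (fun s => f x y s) z
  end.

Definition Gamma (lam : R) (k i j : nat) (x y z : R) : R :=
  / 2 * sum3 (fun l => g1inv lam x y z k l *
     (dpart (fun a b c => g1 lam a b c j l) i x y z
      + dpart (fun a b c => g1 lam a b c i l) j x y z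
      - dpart (fun a b c => g1 lam a b c i j) l x y z)).

Definition ccoord (cx cy cz : R -> R) (k : nat) : R -> R :=
  match k with 0%nat => cx | 1%nat => cy | _ => cz end.

Definition cov_acc (lam : R) (cx cy cz : R -> R) (k : nat) (t : R) : R :=
  Derive_n (ccoord cx cy cz k) 2 t
  + sum3 (fun i => sum3 (fun j =>
      Gamma lam k i j (cx t) (cy t) (cz t)
      * Derive (ccoord cx cy cz i) t * Derive (ccoord cx cy cz j) t)).

Definition frame_e (lam x : R) (i k : nat) : R :=
  match i with
  | 0%nat => kron 2 k
  | 1%nat => kron 1 k - x * kron 2 k
  | _ => lam * kron 0 k
  end.

Definition frameE (lam x : R) (a : nat -> R) (k : nat) : R :=
  sum3 (fun i => a i * frame_e lam x i k).

(* vector product in frame components (index i = frame vector e_{i+1}) *)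
Definition wedge (a b : nat -> R) (k : nat) : R :=
  match k with
  | 0%nat => a 1%nat * b 2%nat - a 2%nat * b 1%nat
  | 1%nat => a 2%nat * b 0%nat - a 0%nat * b 2%nat
  | _ => a 1%nat * b 0%nat - a 0%nat * b 1%nat
  end.

Definition V2 (k : nat) : R := kron 1 k.

(* gamma is a V_2-magnetic curve: nabla_{gamma'} gamma' = V_2 /\ gamma',
   where V_2 and gamma' are expanded in the frame (e1,e2,e3). *)
Definition V2_magnetic (lam : R) (cx cy cz : R -> R) : Prop :=
  forall (t : R) (a b : nat -> R),
    (forall k, (k < 3)%nat -> frameE lam (cx t) a k = V2 k) ->
    (forall k, (k < 3)%nat -> frameE lam (cx t) b k = Derive (ccoord cx cy cz k) t) ->
    forall k, (k < 3)%nat -> cov_acc lam cx cy cz k t = frameE lam (cx t) (wedge a b) k.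

Definition smooth_fun (f : R -> R) : Prop := forall (n : nat) (t : R), ex_derive_n f n t.

(* In coordinates the only non-constant metric coefficients are g_yy = 1 + x^2
   and g_yz = x, so the Christoffel symbols are explicit polynomials in x and
   lam.  Expanding V_2 = x e1 + e2 and gamma' = (z' + x y') e1 + y' e2 +
   (x'/lam) e3 in the frame turns the magnetic equation into three
   second-order ODEs for (x, y, z); the stated system is a combination of
   them, the third equation after differentiating the momentum z' + x y'. *)

From Stdlib Require Import Reals Lra Lia.
From Coquelicot Require Import Coquelicot.
Open Scope R_scope.

Definition dg1 (l i j : nat) (x : R) : R :=
  match l, i, j with
  | 0%nat, 1%nat, 1%nat => 2 * x
  | 0%nat, 1%nat, 2%nat | 0%nat, 2%nat, 1%nat => 1
  | _, _, _ => 0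
  end.

Lemma dpart_g1 (lam x y z : R) (i j l : nat) :
  (i < 3)%nat -> (j < 3)%nat -> (l < 3)%nat ->
  dpart (fun a b c => g1 lam a b c i j) l x y z = dg1 l i j x.
Proof.
intros Hi Hj Hl.
destruct i as [|[|[|i]]]; try lia; destruct j as [|[|[|j]]]; try lia;
  destruct l as [|[|[|l]]]; try lia;
  cbv beta iota delta [dpart g1 kron theta Nat.eqb dg1];
  apply is_derive_unique; auto_derive; auto; ring.
Qed.

Definition Gamma1 (lam : R) (k i j : nat) (x : R) : R :=
  match k, i, j with
  | 0%nat, 1%nat, 1%nat => lam ^ 2 * x
  | 0%nat, 1%nat, 2%nat | 0%nat, 2%nat, 1%nat => lam ^ 2 / 2
  | 1%nat, 0%nat, 1%nat | 1%nat, 1%nat, 0%nat => x / 2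
  | 1%nat, 0%nat, 2%nat | 1%nat, 2%nat, 0%nat => 1 / 2
  | 2%nat, 0%nat, 1%nat | 2%nat, 1%nat, 0%nat => (1 - x ^ 2) / 2
  | 2%nat, 0%nat, 2%nat | 2%nat, 2%nat, 0%nat => - x / 2
  | _, _, _ => 0
  end.

Lemma Gamma_g1 (lam x y z : R) (k i j : nat) :
  lam <> 0 -> (k < 3)%nat -> (i < 3)%nat -> (j < 3)%nat ->
  Gamma lam k i j x y z = Gamma1 lam k i j x.
Proof.
intros Hlam Hk Hi Hj.
unfold Gamma, sum3; rewrite !dpart_g1 by lia.
(* [field] asks for det g1 <> 0 in this unsimplified shape, coming from
   g_yy g_zz - g_yz^2 = (1 + x^2) - x^2. *)
assert (Hdet : lam * lam + x * x * (lam * lam) - x * x * (lam * lam) <> 0).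
{ replace (_ - _) with (lam * lam) by ring; now apply Rmult_integral_contrapositive. }
destruct k as [|[|[|k]]]; try lia; destruct i as [|[|[|i]]]; try lia;
  destruct j as [|[|[|j]]]; try lia;
  cbv beta iota delta [g1inv inv3 cof3 det3 sum3 g1 kron theta Nat.eqb dg1 Gamma1
                       Nat.add Nat.modulo Nat.divmod fst snd];
  simpl; field; auto.
Qed.

Definition Gamma1_quad (lam x : R) (v : nat -> R) (k : nat) : R :=
  match k with
  | 0%nat => lam ^ 2 * v 1%nat * (v 2%nat + x * v 1%nat)
  | 1%nat => v 0%nat * (v 2%nat + x * v 1%nat)
  | _ => (1 - x ^ 2) * v 0%nat * v 1%nat - x * v 0%nat * v 2%nat
  end.

Lemma cov_acc_g1 (lam : R) (cx cy cz : R -> R) (k : nat) (t : R) :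
  lam <> 0 -> (k < 3)%nat ->
  cov_acc lam cx cy cz k t
  = Derive_n (ccoord cx cy cz k) 2 t
    + Gamma1_quad lam (cx t) (fun i => Derive (ccoord cx cy cz i) t) k.
Proof.
intros Hlam Hk; unfold cov_acc, sum3.
rewrite !Gamma_g1 by (auto; lia).
destruct k as [|[|[|k]]]; try lia; unfold Gamma1, Gamma1_quad; field.
Qed.

Definition V2_frame (x : R) (i : nat) : R :=
  match i with 0%nat => x | 1%nat => 1 | _ => 0 end.

Definition velocity_frame (lam x x' y' z' : R) (i : nat) : R :=
  match i with 0%nat => z' + x * y' | 1%nat => y' | _ => x' / lam end.

Lemma frameE_V2 (lam x : R) (k : nat) :
  (k < 3)%nat -> frameE lam x (V2_frame x) k = V2 k.
Proof.
intros Hk; destruct k as [|[|[|k]]]; try lia;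
  unfold frameE, sum3, V2_frame, frame_e, V2, kron; simpl; ring.
Qed.

Lemma frameE_velocity (lam : R) (cx cy cz : R -> R) (t : R) (k : nat) :
  lam <> 0 -> (k < 3)%nat ->
  frameE lam (cx t) (velocity_frame lam (cx t) (Derive cx t) (Derive cy t) (Derive cz t)) k
  = Derive (ccoord cx cy cz k) t.
Proof.
intros Hlam Hk; destruct k as [|[|[|k]]]; try lia;
  unfold frameE, sum3, velocity_frame, frame_e, kron; simpl; field; auto.
Qed.

Lemma frameE_magnetic_force (lam x x' y' z' : R) :
  lam <> 0 ->
  let F := frameE lam x (wedge (V2_frame x) (velocity_frame lam x x' y' z')) in
  F 0%nat = lam * z' /\ F 1%nat = - (x * x') / lam
  /\ F 2%nat = x' * (1 + x ^ 2) / lam.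
Proof.
intros Hlam F; unfold F, frameE, sum3, wedge, V2_frame, velocity_frame, frame_e, kron;
  simpl; repeat split; field; auto.
Qed.

Lemma V2_magnetic_coords (lam : R) (cx cy cz : R -> R) (t : R) :
  lam <> 0 -> V2_magnetic lam cx cy cz ->
  let x := cx t in let x' := Derive cx t in
  let y' := Derive cy t in let z' := Derive cz t in
  Derive_n cx 2 t = lam * z' - lam ^ 2 * y' * (z' + x * y')
  /\ Derive_n cy 2 t = - (x * x') / lam - x' * (z' + x * y')
  /\ Derive_n cz 2 t = x' * (1 + x ^ 2) / lam - (1 - x ^ 2) * x' * y' + x * x' * z'.
Proof.
intros Hlam HM x x' y' z'.
assert (Heq : forall k, (k < 3)%nat ->
  cov_acc lam cx cy cz k t
  = frameE lam x (wedge (V2_frame x) (velocity_frame lam x x' y' z')) k).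
{ apply HM; intros k Hk.
  - now apply frameE_V2.
  - now apply frameE_velocity. }
destruct (frameE_magnetic_force lam x x' y' z' Hlam) as (F0 & F1 & F2).
rewrite <- (Heq 0%nat), cov_acc_g1 in F0 by (auto; lia).
rewrite <- (Heq 1%nat), cov_acc_g1 in F1 by (auto; lia).
rewrite <- (Heq 2%nat), cov_acc_g1 in F2 by (auto; lia).
cbn [ccoord Gamma1_quad] in F0, F1, F2; subst x x' y' z'; repeat split; lra.
Qed.

Lemma Derive_plus_mult (f g h : R -> R) (t : R) :
  ex_derive f t -> ex_derive g t -> ex_derive h t ->
  Derive (fun s => f s + g s * h s) t = Derive f t + Derive g t * h t + g t * Derive h t.
Proof.
intros Hf Hg Hh.
rewrite Derive_plus, Derive_mult; auto.
- ring.
- now apply ex_derive_mult.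
Qed.

Theorem mainTheorem2 (lam : R) (cx cy cz : R -> R) :
  0 < lam ->
  smooth_fun cx -> smooth_fun cy -> smooth_fun cz ->
  V2_magnetic lam cx cy cz ->
  forall t : R,
    Derive_n cy 2 t + Derive cx t * (Derive cz t + cx t * Derive cy t)
      = - (cx t * Derive cx t) / lam
    /\ (lam * Derive cy t - 1) * (Derive cz t + cx t * Derive cy t)
      = - (cx t * Derive cy t) - Derive_n cx 2 t / lam
    /\ Derive (fun s => Derive cz s + cx s * Derive cy s) t = Derive cx t / lam.
Proof.
intros Hlam Sx Sy Sz HM t.
assert (Hlam0 : lam <> 0) by lra.
destruct (V2_magnetic_coords lam cx cy cz t Hlam0 HM) as (Ex & Ey & Ez).
rewrite Derive_plus_mult by first [apply (Sz 2%nat) | apply (Sx 1%nat) | apply (Sy 2%nat)].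
change (Derive (Derive cz) t) with (Derive_n cz 2 t).
change (Derive (Derive cy) t) with (Derive_n cy 2 t).
rewrite Ex, Ey, Ez; repeat split; field; exact Hlam0.
Qed.
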